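(* Let $F_0=\begin{pmatrix}1&1&1\\1&1&0\\1&0&1\end{pmatrix}$. Then $\|F_0\|_{\mathrm{Schur}}\ge\frac{\sqrt{26}}{4}>\frac{1+\sqrt{2}}{2}$. Consequently, if $I$ is any index set and $A=(A(s,t))_{s,t\in I}$ is a matrix for which there exist distinct $s_1,s_2,s_3\in I$ and distinct $t_1,t_2,t_3\in I$ with $(A(s_i,t_j))_{i,j=1}^3=F_0$, then $\|A\|_{\mathrm{Schur}}>\frac{1+\sqrt{2}}{2}$.
   Context: For an index set $I$, let $\mathcal{K}_0$ be the space of matrices indexed by $I\times I$ with only finitely many nonzero entries, viewed as operators on $\ell^2(I)$. The Schur product of matrices $A,X$ indexed by $I\times I$ is $(A\bullet X)(s,t)=A(s,t)X(s,t)$. The Schur multiplier norm of $A$ is $\|A\|_{\mathrm{Schur}}=\sup\{\|A\bullet X\|_{\mathcal{B}(\ell^2(I))}/\|X\|_{\mathcal{B}(\ell^2(I))}: 0\ne X\in\mathcal{K}_0\}$. *)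

From Stdlib Require Import Reals List ClassicalEpsilon.
Import ListNotations.
Open Scope R_scope.

Definition C : Type := (R * R)%type.
Definition C0 : C := (0, 0).
Definition RtoC (r : R) : C := (r, 0).
Definition Cadd (z w : C) : C := (fst z + fst w, snd z + snd w).
Definition Cmul (z w : C) : C :=
  (fst z * fst w - snd z * snd w, fst z * snd w + snd z * fst w).
Definition Cnorm2 (z : C) : R := fst z * fst z + snd z * snd z.

Definition Csum {I : Type} (l : list I) (f : I -> C) : C :=
  fold_right (fun i acc => Cadd (f i) acc) C0 l.
Definition Rsum {I : Type} (l : list I) (f : I -> R) : R :=
  fold_right (fun i acc => f i + acc) 0 l.

Definition mat (I : Type) : Type := I -> I -> C.

Definition finsupp {I : Type} (X : mat I) : Prop :=
  exists l : list I, forall s t, X s t <> C0 -> In s l /\ In t l.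

Definition schur {I : Type} (A X : mat I) : mat I :=
  fun s t => Cmul (A s t) (X s t).

Definition covers {I : Type} (l : list I) (X : mat I) (v : I -> C) : Prop :=
  NoDup l /\ (forall s t, X s t <> C0 -> In s l /\ In t l)
  /\ (forall t, v t <> C0 -> In t l).

(** The set { ||X v||_2 : v finitely supported, ||v||_2 <= 1 }; finitely
    supported vectors are dense in l^2(I), so its supremum is the operator
    norm of X (for X in K_0) on B(l^2(I)). *)
Definition opnorm_set {I : Type} (X : mat I) (r : R) : Prop :=
  exists (v : I -> C) (l : list I),
    covers l X v /\ Rsum l (fun t => Cnorm2 (v t)) <= 1 /\
    r = sqrt (Rsum l (fun s => Cnorm2 (Csum l (fun t => Cmul (X s t) (v t))))).

Definition opnorm {I : Type} (X : mat I) : R :=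
  epsilon (inhabits 0) (fun r => is_lub (opnorm_set X) r).

Definition schur_ratios {I : Type} (A : mat I) (r : R) : Prop :=
  exists X : mat I, finsupp X /\ (exists s t, X s t <> C0) /\
    r = opnorm (schur A X) / opnorm X.

(** ||A||_Schur (a supremum in [0, +oo]) satisfies ||A||_Schur >= c. *)
Definition schur_norm_ge {I : Type} (A : mat I) (c : R) : Prop :=
  forall u, is_upper_bound (schur_ratios A) u -> c <= u.

Definition schur_norm_gt {I : Type} (A : mat I) (c : R) : Prop :=
  ~ is_upper_bound (schur_ratios A) c.

Inductive idx3 : Type := i1 | i2 | i3.

Definition F0 : mat idx3 := fun s t =>
  match s, t with
  | i2, i3 => RtoC 0
  | i3, i2 => RtoC 0
  | _, _ => RtoC 1
  end.

From Pilot Require Import Defs.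
From Stdlib Require Import Reals List Lra Psatz ClassicalEpsilon Classical FinFun
  FunctionalExtensionality.
Import ListNotations.
Open Scope R_scope.

(** Take [X0 = [[1,2,2],[2,1,-2],[2,-2,1]]]; since [X0^2 = 9], its operator norm
    is 3. Its Schur product with [F0] is [Y0 = [[1,2,2],[2,1,0],[2,0,1]]], and the
    test vector [(10,7,7)] gives [|Y0 w|^2 / |w|^2 = 2902/198], so
    [|F0 . X0| / |X0| >= sqrt (2902/198) / 3 >= sqrt 26 / 4].
    For a matrix [A] containing [F0] on rows [s] and columns [t], the same
    ratio is attained by the copy of [X0] placed on those rows and columns,
    whose operator norm on [l^2(I)] equals that of the 3x3 matrix. *)

Lemma Rsum_ext {I : Type} (l : list I) (f g : I -> R) :
  (forall a, f a = g a) -> Rsum l f = Rsum l g.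
Proof. intro H; induction l as [|a l IH]; simpl; [reflexivity | now rewrite H, IH]. Qed.

Lemma Rsum_le {I : Type} (l : list I) (f g : I -> R) :
  (forall a, f a <= g a) -> Rsum l f <= Rsum l g.
Proof. intro H; induction l as [|a l IH]; simpl; [lra | specialize (H a); lra]. Qed.

Lemma Rsum_plus {I : Type} (l : list I) (f g : I -> R) :
  Rsum l (fun a => f a + g a) = Rsum l f + Rsum l g.
Proof. induction l as [|a l IH]; simpl; [ring | rewrite IH; ring]. Qed.

Lemma fst_Csum {I : Type} (l : list I) (f : I -> Defs.C) :
  fst (Csum l f) = Rsum l (fun a => fst (f a)).
Proof. induction l as [|a l IH]; simpl; [reflexivity | now rewrite IH]. Qed.

Lemma snd_Csum {I : Type} (l : list I) (f : I -> Defs.C) :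
  snd (Csum l f) = Rsum l (fun a => snd (f a)).
Proof. induction l as [|a l IH]; simpl; [reflexivity | now rewrite IH]. Qed.

Definition kdelta {I : Type} (a b : I) : R :=
  if excluded_middle_informative (a = b) then 1 else 0.

Lemma kdelta_refl {I : Type} (a : I) : kdelta a a = 1.
Proof. unfold kdelta; destruct excluded_middle_informative; congruence. Qed.

Lemma kdelta_neq {I : Type} (a b : I) : a <> b -> kdelta a b = 0.
Proof. intro H; unfold kdelta; destruct excluded_middle_informative; congruence. Qed.

Lemma Rsum_kdelta_notin {I : Type} (l : list I) (x : I) (c : R) :
  ~ In x l -> Rsum l (fun a => kdelta a x * c) = 0.
Proof.
  induction l as [|a l IH]; simpl; intro Hx; [reflexivity |].
  rewrite kdelta_neq, IH by tauto; ring.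
Qed.

Lemma Rsum_kdelta {I : Type} (l : list I) (x : I) (c : R) :
  NoDup l -> In x l \/ c = 0 -> Rsum l (fun a => kdelta a x * c) = c.
Proof.
  induction l as [|a l IH]; simpl; intros Hl Hx; [intuition |].
  apply NoDup_cons_iff in Hl as [Ha Hl].
  destruct (classic (a = x)) as [<- | Hax].
  - rewrite kdelta_refl, Rsum_kdelta_notin by exact Ha; ring.
  - rewrite kdelta_neq, IH by (auto; intuition); ring.
Qed.

Definition S3 (f : idx3 -> R) : R := f i1 + f i2 + f i3.
Definition dot3 (x y : idx3 -> R) : R := S3 (fun j => x j * y j).
Definition sqnorm3 (x : idx3 -> R) : R := dot3 x x.
Definition mv (M : idx3 -> idx3 -> R) (x : idx3 -> R) (i : idx3) : R := dot3 (M i) x.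

Lemma Rsum_S3 {I : Type} (l : list I) (F : idx3 -> I -> R) :
  Rsum l (fun a => S3 (fun i => F i a)) = S3 (fun i => Rsum l (F i)).
Proof. unfold S3; rewrite !Rsum_plus; reflexivity. Qed.

Lemma Cauchy_Schwarz3 (x y : idx3 -> R) :
  dot3 x y * dot3 x y <= sqnorm3 x * sqnorm3 y.
Proof.
  unfold sqnorm3, dot3, S3.
  pose proof (pow2_ge_0 (x i1 * y i2 - x i2 * y i1)).
  pose proof (pow2_ge_0 (x i1 * y i3 - x i3 * y i1)).
  pose proof (pow2_ge_0 (x i2 * y i3 - x i3 * y i2)).
  nra.
Qed.

Lemma sqnorm3_mv_le M x :
  sqnorm3 (mv M x) <= S3 (fun i => sqnorm3 (M i)) * sqnorm3 x.
Proof.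
  pose proof (Cauchy_Schwarz3 (M i1) x).
  pose proof (Cauchy_Schwarz3 (M i2) x).
  pose proof (Cauchy_Schwarz3 (M i3) x).
  unfold sqnorm3 at 1, dot3 at 1, mv, S3 at 1 2; lra.
Qed.

Definition ext3 {I : Type} (e : idx3 -> I) (g : idx3 -> R) (a : I) : R :=
  S3 (fun i => kdelta a (e i) * g i).

Definition emb {I : Type} (s t : idx3 -> I) (M : idx3 -> idx3 -> R) : mat I :=
  fun a b => RtoC (ext3 s (fun i => ext3 t (M i) b) a).

Section Extension.

Context {I : Type} (e : idx3 -> I).
Hypothesis e_inj : Injective e.

Lemma image3_dec (a : I) : (forall i, a <> e i) \/ exists i, a = e i.
Proof. destruct (classic (exists i, a = e i)) as [H | H]; [right | left]; firstorder. Qed.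

Lemma ext3_out g a : (forall i, a <> e i) -> ext3 e g a = 0.
Proof. intro Ha; unfold ext3, S3; rewrite !kdelta_neq by apply Ha; ring. Qed.

Lemma ext3_at g i : ext3 e g (e i) = g i.
Proof.
  assert (Hneq : forall j k, j <> k -> e j <> e k) by (intros j k Hjk E; auto).
  unfold ext3, S3; destruct i;
    repeat first [rewrite kdelta_refl | rewrite kdelta_neq by (apply Hneq; discriminate)];
    ring.
Qed.

Lemma ext3_mul g h a : ext3 e g a * ext3 e h a = ext3 e (fun i => g i * h i) a.
Proof.
  destruct (image3_dec a) as [Ha | [i ->]].
  - rewrite !ext3_out by exact Ha; ring.
  - now rewrite !ext3_at.
Qed.

Lemma Rsum_ext3 (l : list I) g :
  NoDup l -> (forall i, In (e i) l \/ g i = 0) -> Rsum l (ext3 e g) = S3 g.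
Proof.
  intros Hl Hg; unfold ext3; rewrite Rsum_S3; unfold S3 at 1.
  rewrite !Rsum_kdelta by auto; reflexivity.
Qed.

Lemma Rsum_supported (l : list I) (f : I -> R) :
  NoDup l -> (forall a, (forall i, a <> e i) -> f a = 0) ->
  (forall i, In (e i) l \/ f (e i) = 0) ->
  Rsum l f = S3 (fun i => f (e i)).
Proof.
  intros Hl Hsupp Hin; rewrite <- (Rsum_ext3 l) by assumption.
  apply Rsum_ext; intro a; destruct (image3_dec a) as [Ha | [i ->]].
  - rewrite ext3_out, Hsupp by exact Ha; reflexivity.
  - now rewrite ext3_at.
Qed.

End Extension.

Section Embedding.

Context {I : Type} (s t : idx3 -> I).
Hypotheses (s_inj : Injective s) (t_inj : Injective t).

Lemma emb_at M i j : emb s t M (s i) (t j) = RtoC (M i j).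
Proof. unfold emb; rewrite ext3_at by exact s_inj; now rewrite ext3_at. Qed.

Lemma emb_col M a j : emb s t M a (t j) = RtoC (ext3 s (fun i => M i j) a).
Proof.
  unfold emb; do 2 f_equal; extensionality i; now apply ext3_at.
Qed.

Lemma emb_out M a b :
  (forall i, a <> s i) \/ (forall j, b <> t j) -> emb s t M a b = C0.
Proof.
  unfold emb; intros [Ha | Hb].
  - rewrite ext3_out by exact Ha; reflexivity.
  - assert (Hrow : (fun i => ext3 t (M i) b) = fun _ => 0)
      by (extensionality i; now apply ext3_out).
    rewrite Hrow; unfold RtoC, C0, ext3, S3; f_equal; ring.
Qed.

Lemma emb_support M a b :
  emb s t M a b <> C0 -> (exists i, a = s i) /\ (exists j, b = t j).
Proof.
  intro Hab; destruct (image3_dec s a) as [Ha | Ha]; [now rewrite emb_out in Hab; auto |].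
  destruct (image3_dec t b) as [Hb | Hb]; [now rewrite emb_out in Hab; auto |].
  now split.
Qed.

Lemma finsupp_emb M : finsupp (emb s t M).
Proof.
  exists (map s [i1; i2; i3] ++ map t [i1; i2; i3])%list.
  intros a b Hab; destruct (emb_support M a b Hab) as [[i ->] [j ->]].
  split; apply in_or_app; [left; destruct i | right; destruct j]; simpl; tauto.
Qed.

Lemma schur_emb (A : mat I) (F M : idx3 -> idx3 -> R) :
  (forall i j, A (s i) (t j) = RtoC (F i j)) ->
  schur A (emb s t M) = emb s t (fun i j => F i j * M i j).
Proof.
  intro HA; extensionality a; extensionality b; unfold schur.
  destruct (image3_dec s a) as [Ha | [i ->]].
  { rewrite !emb_out by auto; unfold Cmul, C0; simpl; f_equal; ring. }
  destruct (image3_dec t b) as [Hb | [j ->]].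
  { rewrite !emb_out by auto; unfold Cmul, C0; simpl; f_equal; ring. }
  rewrite !emb_at, HA; unfold Cmul, RtoC; simpl; f_equal; ring.
Qed.

Section Norm.

Variables (M : idx3 -> idx3 -> R) (l : list I) (v : I -> Defs.C).
Hypothesis Hcov : covers l (emb s t M) v.

Lemma covers_outside x : ~ In x l -> v x = C0.
Proof. destruct Hcov as (_ & _ & Hv); intro Hx; apply NNPP; auto. Qed.

(** [p] is [fst] or [snd]: the real and imaginary parts are handled alike
    because [M] is real. *)
Lemma Rsum_emb_row (p : Defs.C -> R) a :
  (forall x z, p (Cmul (RtoC x) z) = x * p z) ->
  Rsum l (fun b => p (Cmul (emb s t M a b) (v b)))
  = ext3 s (mv M (fun j => p (v (t j)))) a.
Proof.
  intro Hp; destruct Hcov as (Hl & _).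
  assert (Hp0 : forall z, p (Cmul C0 z) = 0)
    by (intro z; change C0 with (RtoC 0); rewrite Hp; ring).
  assert (HpC0 : p C0 = 0).
  { replace C0 with (Cmul C0 C0) by (unfold Cmul, C0; simpl; f_equal; ring).
    apply Hp0. }
  rewrite (Rsum_supported t t_inj l); [| exact Hl | |].
  - unfold S3; rewrite !emb_col, !Hp; unfold ext3, mv, dot3, S3; ring.
  - intros b Hb; rewrite emb_out by auto; apply Hp0.
  - intro j; destruct (classic (In (t j) l)) as [Hj | Hj]; [now left | right].
    rewrite emb_col, covers_outside, Hp, HpC0 by exact Hj; ring.
Qed.

Lemma Rsum_Cnorm2_emb :
  Rsum l (fun a => Cnorm2 (Csum l (fun b => Cmul (emb s t M a b) (v b))))
  = sqnorm3 (mv M (fun j => fst (v (t j)))) + sqnorm3 (mv M (fun j => snd (v (t j)))).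
Proof.
  destruct Hcov as (Hl & Hsupp & _).
  set (x := fun j => fst (v (t j))); set (y := fun j => snd (v (t j))).
  transitivity (Rsum l (ext3 s (fun i => mv M x i * mv M x i + mv M y i * mv M y i))).
  { apply Rsum_ext; intro a; unfold Cnorm2.
    rewrite fst_Csum, snd_Csum.
    rewrite (Rsum_emb_row fst), (Rsum_emb_row snd).
    2, 3: intros; unfold Cmul, RtoC; simpl; ring.
    rewrite !(ext3_mul s s_inj).
    unfold x, y, ext3, S3; ring. }
  rewrite (Rsum_ext3 s l); [unfold sqnorm3, dot3, S3; ring | exact Hl |].
  intro i; destruct (classic (In (s i) l)) as [Hi | Hi]; [now left | right].
  assert (Hrow : forall j, M i j = 0).
  { intro j; apply NNPP; intro Hij; apply Hi, (Hsupp _ (t j)).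
    rewrite emb_at; unfold RtoC, C0; intro E; injection E; auto. }
  unfold mv, dot3, S3; rewrite !Hrow; ring.
Qed.

Lemma sqnorm3_le_Rsum_Cnorm2 :
  sqnorm3 (fun j => fst (v (t j))) + sqnorm3 (fun j => snd (v (t j)))
  <= Rsum l (fun b => Cnorm2 (v b)).
Proof.
  destruct Hcov as (Hl & _).
  replace (_ + _) with (Rsum l (ext3 t (fun j => Cnorm2 (v (t j))))).
  - apply Rsum_le; intro b; destruct (image3_dec t b) as [Hb | [j ->]].
    + rewrite ext3_out by exact Hb; unfold Cnorm2; nra.
    + rewrite ext3_at by exact t_inj; apply Rle_refl.
  - rewrite (Rsum_ext3 t l); [unfold sqnorm3, dot3, S3, Cnorm2; ring | exact Hl |].
    intro j; destruct (classic (In (t j) l)) as [Hj | Hj]; [now left | right].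
    rewrite covers_outside by exact Hj; unfold Cnorm2, C0; simpl; ring.
Qed.

End Norm.

Lemma opnorm_set_emb_le M K r :
  (forall x, sqnorm3 (mv M x) <= K * sqnorm3 x) ->
  opnorm_set (emb s t M) r -> r <= sqrt K.
Proof.
  intros HK (v & l & Hcov & Hv & ->).
  assert (K_ge0 : 0 <= K).
  { specialize (HK (fun _ => 1)); unfold sqnorm3 at 2, dot3, S3 in HK.
    assert (0 <= sqnorm3 (mv M (fun _ => 1))) by (unfold sqnorm3, dot3, S3; nra).
    lra. }
  apply sqrt_le_1_alt; rewrite Rsum_Cnorm2_emb by exact Hcov.
  pose proof (sqnorm3_le_Rsum_Cnorm2 M l v Hcov).
  pose proof (HK (fun j => fst (v (t j)))); pose proof (HK (fun j => snd (v (t j)))).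
  nra.
Qed.

Lemma opnorm_set_emb_real M w :
  sqnorm3 w <= 1 -> opnorm_set (emb s t M) (sqrt (sqnorm3 (mv M w))).
Proof.
  intro Hw.
  set (L := nodup (fun a b : I => excluded_middle_informative (a = b))
                  (map s [i1; i2; i3] ++ map t [i1; i2; i3])).
  assert (HLs : forall i, In (s i) L)
    by (intro i; apply nodup_In, in_or_app; left; destruct i; simpl; tauto).
  assert (HLt : forall j, In (t j) L)
    by (intro j; apply nodup_In, in_or_app; right; destruct j; simpl; tauto).
  set (v := fun b => RtoC (ext3 t w b)).
  assert (Hcov : covers L (emb s t M) v).
  { split; [apply NoDup_nodup | split].
    - intros a b Hab; destruct (emb_support M a b Hab) as [[i ->] [j ->]]; auto.
    - intros b Hb; destruct (image3_dec t b) as [Hout | [j ->]]; [| auto].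
      exfalso; apply Hb; unfold v; rewrite ext3_out by exact Hout; reflexivity. }
  exists v, L; split; [exact Hcov | split].
  - replace (Rsum L (fun b => Cnorm2 (v b))) with (Rsum L (ext3 t (fun j => w j * w j))).
    + rewrite (Rsum_ext3 t L) by (apply NoDup_nodup || auto); exact Hw.
    + apply Rsum_ext; intro b; unfold v, Cnorm2, RtoC; simpl.
      rewrite <- (ext3_mul t t_inj); ring.
  - rewrite Rsum_Cnorm2_emb by exact Hcov.
    assert (Hre : (fun j => fst (v (t j))) = w)
      by (extensionality j; exact (ext3_at t t_inj w j)).
    assert (Him : (fun j => snd (v (t j))) = fun _ => 0) by reflexivity.
    rewrite Hre, Him; f_equal.
    replace (sqnorm3 (mv M (fun _ => 0))) with 0 by (unfold sqnorm3, mv, dot3, S3; ring).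
    ring.
Qed.

Lemma opnorm_set_emb_ratio M w :
  0 < sqnorm3 w -> opnorm_set (emb s t M) (sqrt (sqnorm3 (mv M w) / sqnorm3 w)).
Proof.
  intro Hw; set (c := sqrt (sqnorm3 w)).
  assert (Hc : c * c = sqnorm3 w) by (apply sqrt_sqrt; lra).
  assert (c_pos : 0 < c) by (apply sqrt_lt_R0; exact Hw).
  assert (Hscale : forall x, sqnorm3 (fun j => x j / c) = sqnorm3 x / sqnorm3 w)
    by (intro x; rewrite <- Hc; unfold sqnorm3, dot3, S3; field; lra).
  assert (Hmv : mv M (fun j => w j / c) = fun i => mv M w i / c)
    by (extensionality i; unfold mv, dot3, S3; field; lra).
  rewrite <- Hscale, <- Hmv.
  apply opnorm_set_emb_real; rewrite Hscale; unfold Rdiv; rewrite Rinv_r; lra.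
Qed.

Lemma opnorm_emb_lub M : is_lub (opnorm_set (emb s t M)) (opnorm (emb s t M)).
Proof.
  unfold opnorm; apply epsilon_spec.
  destruct (completeness (opnorm_set (emb s t M))) as [m Hm]; [| | now exists m].
  - exists (sqrt (S3 (fun i => sqnorm3 (M i)))); intros r Hr.
    exact (opnorm_set_emb_le M _ r (sqnorm3_mv_le M) Hr).
  - exists (sqrt (sqnorm3 (mv M (fun _ => 0)))).
    apply opnorm_set_emb_real; unfold sqnorm3, dot3, S3; lra.
Qed.

Lemma opnorm_emb_le M K :
  (forall x, sqnorm3 (mv M x) <= K * sqnorm3 x) -> opnorm (emb s t M) <= sqrt K.
Proof. intro HK; apply opnorm_emb_lub; intros r; exact (opnorm_set_emb_le M K r HK). Qed.

Lemma opnorm_emb_ge M w :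
  0 < sqnorm3 w -> sqrt (sqnorm3 (mv M w) / sqnorm3 w) <= opnorm (emb s t M).
Proof. intro Hw; apply opnorm_emb_lub, opnorm_set_emb_ratio, Hw. Qed.

End Embedding.

(** [X0 = 3 U] with [U] orthogonal. *)
Definition X0 (i j : idx3) : R :=
  match i, j with
  | i1, i1 | i2, i2 | i3, i3 => 1
  | i2, i3 | i3, i2 => -2
  | _, _ => 2
  end.

Definition Y0 (i j : idx3) : R := fst (F0 i j) * X0 i j.

Lemma F0_real i j : F0 i j = RtoC (fst (F0 i j)).
Proof. now destruct i, j. Qed.

Lemma sqnorm3_mv_X0 x : sqnorm3 (mv X0 x) = 9 * sqnorm3 x.
Proof. unfold sqnorm3, mv, dot3, S3, X0; ring. Qed.

Lemma opnorm_emb_X0 {I : Type} (s t : idx3 -> I) :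
  Injective s -> Injective t -> opnorm (emb s t X0) = 3.
Proof.
  intros Hs Ht.
  assert (sqrt_9 : sqrt 9 = 3) by (replace 9 with (3 * 3) by ring; apply sqrt_square; lra).
  apply Rle_antisym.
  - rewrite <- sqrt_9; apply opnorm_emb_le; [assumption.. |].
    intro x; rewrite sqnorm3_mv_X0; apply Rle_refl.
  - set (e1 := fun j => match j with i1 => 1 | _ => 0 end).
    replace 3 with (sqrt (sqnorm3 (mv X0 e1) / sqnorm3 e1)).
    + apply opnorm_emb_ge; [assumption.. |]; unfold e1, sqnorm3, dot3, S3; lra.
    + rewrite <- sqrt_9; f_equal; unfold e1, sqnorm3, mv, dot3, S3, X0; field.
Qed.

Lemma opnorm_emb_Y0_ge {I : Type} (s t : idx3 -> I) :
  Injective s -> Injective t -> sqrt (2902 / 198) <= opnorm (emb s t Y0).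
Proof.
  intros Hs Ht; set (w := fun j => match j with i1 => 10 | _ => 7 end).
  replace (2902 / 198) with (sqnorm3 (mv Y0 w) / sqnorm3 w).
  - apply opnorm_emb_ge; [assumption.. |]; unfold w, sqnorm3, dot3, S3; lra.
  - unfold w, sqnorm3, mv, dot3, S3, Y0, X0; simpl; field.
Qed.

Lemma sqrt26_div4_le : sqrt 26 / 4 <= sqrt (2902 / 198) / 3.
Proof.
  pose proof (sqrt_pos 26); pose proof (sqrt_pos (2902 / 198)).
  pose proof (sqrt_sqrt 26 ltac:(lra)); pose proof (sqrt_sqrt (2902 / 198) ltac:(lra)).
  nra.
Qed.

Lemma sqrt26_div4_gt : sqrt 26 / 4 > (1 + sqrt 2) / 2.
Proof.
  pose proof (sqrt_pos 26); pose proof (sqrt_pos 2).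
  pose proof (sqrt_sqrt 26 ltac:(lra)); pose proof (sqrt_sqrt 2 ltac:(lra)).
  assert (sqrt 2 < 7 / 4) by nra.
  nra.
Qed.

Lemma schur_ratio_ge_of_F0_block {I : Type} (A : mat I) (s t : idx3 -> I) :
  Injective s -> Injective t -> (forall i j, A (s i) (t j) = F0 i j) ->
  exists r, schur_ratios A r /\ sqrt 26 / 4 <= r.
Proof.
  intros Hs Ht HA.
  exists (opnorm (emb s t Y0) / opnorm (emb s t X0)); split.
  - exists (emb s t X0); split; [apply finsupp_emb | split].
    + exists (s i1), (t i1); rewrite emb_at by assumption.
      unfold RtoC, C0, X0; intro E; injection E; lra.
    + rewrite (schur_emb s t Hs Ht A (fun i j => fst (F0 i j))); [reflexivity |].
      intros i j; rewrite HA; apply F0_real.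
  - rewrite opnorm_emb_X0 by assumption.
    pose proof (opnorm_emb_Y0_ge s t Hs Ht); pose proof sqrt26_div4_le.
    unfold Rdiv in *; lra.
Qed.

Theorem mainTheorem3 :
  schur_norm_ge F0 (sqrt 26 / 4) /\
  sqrt 26 / 4 > (1 + sqrt 2) / 2 /\
  (forall (I : Type) (A : mat I) (s t : idx3 -> I),
     (forall i j, s i = s j -> i = j) ->
     (forall i j, t i = t j -> i = j) ->
     (forall i j, A (s i) (t j) = F0 i j) ->
     schur_norm_gt A ((1 + sqrt 2) / 2)).
Proof.
  split; [| split; [exact sqrt26_div4_gt |]].
  - intros u Hu.
    destruct (schur_ratio_ge_of_F0_block F0 (fun i => i) (fun i => i)) as (r & Hr & Hle);
      [now intros ?? | now intros ?? | reflexivity |].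
    apply (Rle_trans _ r); [exact Hle | exact (Hu r Hr)].
  - intros I A s t Hs Ht HA Hbound.
    destruct (schur_ratio_ge_of_F0_block A s t Hs Ht HA) as (r & Hr & Hle).
    pose proof (Hbound r Hr); pose proof sqrt26_div4_gt; lra.
Qed.
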